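(* Let $f:[0,1]\to\mathbb{R}$ be bounded and measurable, let $0<a<b<1$, and assume $f(t)=c$ for all $t\in(a,b)$, for some real constant $c$. Let $n\in\mathbb{N}$ and $k\in\mathbb{N}\cup\{0\}$ with $k<n$, and assume that the interval $I=\left(\frac{na}{n-k},\, b-\frac{k}{n}\right)$ is nonempty. Then for every $x\in I$, \[ |L_{n,k}f(x)-f(x)|\leq \|f-c\|\left(e^{-(n-k)r\left(x,\frac{na}{n-k}\right)}+e^{-(n-k)r\left(x,b-\frac{k}{n}\right)}\right). \]
   Context: For $x\in[0,1]$ and $m\in\mathbb{N}\cup\{0\}$, let $S_m(x)=Y_1(x)+\cdots+Y_m(x)$ where $Y_1(x),Y_2(x),\ldots$ are independent Bernoulli random variables with $P(Y_i(x)=1)=1-P(Y_i(x)=0)=x$ (so $S_m(x)$ is binomial with parameters $m,x$; $S_0(x)=0$). Let $W_k$ be any random variable taking values in $[0,k]$, independent of the $Y_i(x)$. For bounded measurable $f:[0,1]\to\mathbb{R}$, define $L_{n,k}f(x)=\mathbb{E}\, f\!\left(\frac{S_{n-k}(x)+W_k}{n}\right)$. (For example, when $W_k$ is a sum of $k$ independent uniform $[0,1]$ variables this is the Bernstein–Kantorovich operator, and $k=0$ gives the Bernstein polynomial.) $\|f-c\|=\sup_{t\in[0,1]}|f(t)-c|$. For $x,\theta\in(0,1)$, $r(x,\theta)=\theta\log\frac{\theta}{x}+(1-\theta)\log\frac{1-\theta}{1-x}$. *)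

From mathcomp Require Import all_boot all_order all_algebra.
From mathcomp Require Import all_classical all_reals all_analysis.
Set Implicit Arguments. Unset Strict Implicit. Unset Printing Implicit Defensive.
Import Order.TTheory GRing.Theory Num.Theory.
Local Open Scope classical_set_scope.
Local Open Scope ring_scope.

(* L_{n,k} f x = E f((S_{n-k}(x) + W_k)/n), with S_{n-k}(x) ~ Bin(n-k,x)
   independent of W_k whose law is mu (a probability measure on R
   concentrated on [0,k]).  By independence the expectation is the
   binomial mixture of the integrals against the law of W_k. *)
Definition Lnk (R : realType) (mu : probability R R) (n k : nat)
    (f : R -> R) (x : R) : R :=
  \sum_(j < (n - k).+1)
     ('C(n - k, j))%:R * x ^+ j * (1 - x) ^+ (n - k - j)
     * Rintegral mu `[0, k%:R] (fun w => f ((j%:R + w) / n%:R)).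

Definition supnorm01 (R : realType) (f : R -> R) (c : R) : R :=
  sup [set `|f t - c| | t in `[0, 1]].

Definition rfun (R : realType) (x theta : R) : R :=
  theta * ln (theta / x) + (1 - theta) * ln ((1 - theta) / (1 - x)).

From mathcomp Require Import all_boot all_order all_algebra.
From mathcomp Require Import all_classical all_reals all_analysis.
From mathcomp Require Import measurable_realfun ring lra.
Set Implicit Arguments. Unset Strict Implicit. Unset Printing Implicit Defensive.
Import Order.TTheory GRing.Theory Num.Theory.
Local Open Scope classical_set_scope.
Local Open Scope ring_scope.

(* L_{n,k} f x is an average of the coefficients E f((j + W_k)/n), 0 <= j <= n - k,
   with binomial weights P(S_{n-k}(x) = j).  As W_k lies in [0, k], a coefficient
   equals c = f x as soon as na < j < nb - k, and differs from c by at most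
   ||f - c|| otherwise.  So the error is at most ||f - c|| times the two tails
   P(S_{n-k}(x) <= na) and P(S_{n-k}(x) >= nb - k); since na = (n - k) th1 and
   nb - k >= (n - k) th2 for the two endpoints th1 < x < th2 of I, the Chernoff
   bounds P(S_m <= m th) <= exp(-m r(x, th)) (th < x) and
   P(S_m >= m th) <= exp(-m r(x, th)) (x < th) conclude. *)

Section BernsteinBasis.
Variable R : realType.
Implicit Types (m j : nat) (x s th : R).

Definition bern m x j : R := 'C(m, j)%:R * x ^+ j * (1 - x) ^+ (m - j).

Lemma bern_ge0 m x j : 0 <= x <= 1 -> 0 <= bern m x j.
Proof. by case/andP=> x0 x1; rewrite !(mulr_ge0, exprn_ge0, ler0n) ?subr_ge0. Qed.

Lemma sum_bern_expR m x s :
  \sum_(j < m.+1) bern m x j * expR (j%:R * s) = (1 - x + x * expR s) ^+ m.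
Proof.
rewrite exprDn; apply: eq_bigr => j _.
rewrite /bern expRM_natl exprMn -mulr_natl; ring.
Qed.

Lemma sum_bern m x : \sum_(j < m.+1) bern m x j = 1.
Proof.
have := sum_bern_expR m x 0; rewrite expR0 mulr1 subrK expr1n => <-.
by apply: eq_bigr => j _; rewrite mulr0 expR0 mulr1.
Qed.

Lemma bern_chernoff m x s th (P : pred nat) : 0 <= x <= 1 ->
  (forall j, P j -> 0 <= (j%:R - m%:R * th) * s) ->
  \sum_(j < m.+1) bern m x j * (P j)%:R <=
    expR (- (m%:R * th * s)) * (1 - x + x * expR s) ^+ m.
Proof.
move=> x01 Ptilt; rewrite -sum_bern_expR mulr_sumr; apply: ler_sum => j _.
rewrite mulrCA -expRD; apply: ler_wpM2l; first exact: bern_ge0.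
have [Pj|_] := boolP (P j); last exact: expR_ge0.
rewrite -[true%:R]expR0 ler_expR addrC -mulNr -mulrDl.
exact: Ptilt.
Qed.

Lemma bern_tail_rfun m x th (P : pred nat) : 0 < x < 1 -> 0 < th < 1 ->
  (forall j, P j ->
     0 <= (j%:R - m%:R * th) * ln (th * (1 - x) / (x * (1 - th)))) ->
  \sum_(j < m.+1) bern m x j * (P j)%:R <= expR (- (m%:R * rfun x th)).
Proof.
move=> /andP[x0 x1] /andP[th0 th1] Ptilt.
have x1' : 0 < 1 - x by rewrite subr_gt0.
have th1' : 0 < 1 - th by rewrite subr_gt0.
have optimal_tilt : expR (- (m%:R * th * ln (th * (1 - x) / (x * (1 - th)))))
    * (1 - x + x * expR (ln (th * (1 - x) / (x * (1 - th))))) ^+ m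
    = expR (- (m%:R * rfun x th)).
  have -> : 1 - x + x * expR (ln (th * (1 - x) / (x * (1 - th)))) =
            (1 - x) / (1 - th).
    by rewrite lnK ?posrE ?divr_gt0 ?mulr_gt0 //; field; rewrite !gt_eqF.
  rewrite -[(1 - x) / _]lnK ?posrE ?divr_gt0 // -expRM_natl -expRD.
  congr expR.
  by rewrite /rfun !ln_div ?posrE ?mulr_gt0 ?divr_gt0 // !lnM ?posrE //; ring.
by rewrite -optimal_tilt bern_chernoff // !ltW.
Qed.

Lemma bern_lower_tail m x th (P : pred nat) : 0 < th -> th < x -> x < 1 ->
  (forall j, P j -> j%:R <= m%:R * th) ->
  \sum_(j < m.+1) bern m x j * (P j)%:R <= expR (- (m%:R * rfun x th)).
Proof.
move=> th0 thx x1 Plow; apply: bern_tail_rfun => [||j /Plow jth].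
- by rewrite x1 (lt_trans th0 thx).
- by rewrite th0 (lt_trans thx x1).
apply: mulr_le0; first by rewrite subr_le0.
by apply: ln_le0; rewrite ler_pdivrMr ?mul1r ?mulr_gt0 ?subr_gt0; nra.
Qed.

Lemma bern_upper_tail m x th (P : pred nat) : 0 < x -> x < th -> th < 1 ->
  (forall j, P j -> m%:R * th <= j%:R) ->
  \sum_(j < m.+1) bern m x j * (P j)%:R <= expR (- (m%:R * rfun x th)).
Proof.
move=> x0 xth th1 Pup; apply: bern_tail_rfun => [||j /Pup thj].
- by rewrite x0 (lt_trans xth th1).
- by rewrite th1 (lt_trans x0 xth).
apply: mulr_ge0; first by rewrite subr_ge0.
by apply: ln_ge0; rewrite ler_pdivlMr ?mul1r ?mulr_gt0 ?subr_gt0; nra.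
Qed.

End BernsteinBasis.

Section UnitMassIntegral.
Context d (T : measurableType d) (R : realType).
Variables (mu : {measure set T -> \bar R}) (D : set T).
Hypotheses (mD : measurable D) (muD1 : mu D = 1%E).

Lemma Rintegral_cst_mass1 (r : R) : \int[mu]_(w in D) r = r.
Proof. by rewrite Rintegral_cst // muD1 mulr1. Qed.

Lemma integrable_cst_mass1 (r : R) : mu.-integrable D (EFin \o cst r).
Proof.
apply: measurable_bounded_integrable => //; first by rewrite muD1 ltry.
exact: bounded_cst.
Qed.

Lemma eq_Rintegral_cst (g : T -> R) (c : R) :
  (forall w, D w -> g w = c) -> \int[mu]_(w in D) g w = c.
Proof.
move=> gc; rewrite -[RHS]Rintegral_cst_mass1; apply: eq_Rintegral => w.
by rewrite inE => /gc.
Qed.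

Lemma Rintegral_dist_le (g : T -> R) (c S : R) :
  mu.-integrable D (EFin \o g) -> (forall w, D w -> `|g w - c| <= S) ->
  `|\int[mu]_(w in D) g w - c| <= S.
Proof.
move=> gint gS.
rewrite ler_distl -[c - S]Rintegral_cst_mass1 -[c + S]Rintegral_cst_mass1.
apply/andP; split; apply: le_Rintegral => //;
  do ?exact: integrable_cst_mass1;
  by move=> w /gS; rewrite ler_distl => /andP[].
Qed.

End UnitMassIntegral.

Section BernsteinKantorovich.
Variables (R : realType) (mu : probability R R) (n k : nat) (f : R -> R) (c : R).
Hypotheses (fm : measurable_fun (`[0, 1] : set R) f)
  (fbd : exists M : R, forall t, t \in `[0, 1] -> `|f t| <= M)
  (mu1 : mu `[0, k%:R]%classic = 1%E) (n0 : (0 < n)%N).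

Lemma supnorm01_ub t : t \in `[0, 1] -> `|f t - c| <= supnorm01 f c.
Proof.
move=> t01; apply: ub_le_sup; last by exists t.
have [M fM] := fbd; exists (M + `|c|) => _ [u u01 <-].
by apply: (le_trans (ler_normB _ _)); rewrite lerD2r fM.
Qed.

Lemma supnorm01_ge0 : 0 <= supnorm01 f c.
Proof.
by apply: le_trans (@supnorm01_ub 0 _); rewrite // in_itv /= lexx ler01.
Qed.

Definition Lnk_coef (j : nat) : R :=
  \int[mu]_(w in `[0, k%:R]) f ((j%:R + w) / n%:R).

Lemma LnkE x :
  Lnk mu n k f x = \sum_(j < (n - k).+1) bern (n - k) x j * Lnk_coef j.
Proof. by []. Qed.

Lemma Lnk_node_in01 j (w : R) : (j + k <= n)%N -> w \in `[0, k%:R] ->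
  (j%:R + w) / n%:R \in `[0, 1].
Proof.
rewrite !in_itv /= => jkn /andP[w0 wk].
have jkn' : j%:R + k%:R <= n%:R :> R by rewrite -natrD ler_nat.
have nR : 0 < n%:R :> R by rewrite ltr0n.
by rewrite divr_ge0 ?addr_ge0 //= ler_pdivrMr // mul1r; lra.
Qed.

Lemma measurable_Lnk_integrand j : (j + k <= n)%N ->
  measurable_fun (`[0, k%:R] : set R) (fun w => f ((j%:R + w) / n%:R)).
Proof.
move=> jkn; apply: (measurable_comp (measurable_itv _) _ fm).
  by move=> _ [w wk <-]; apply: Lnk_node_in01.
by apply: measurable_funM => //; apply: measurable_funD.
Qed.

Lemma Lnk_coef_dist_le j : (j + k <= n)%N -> `|Lnk_coef j - c| <= supnorm01 f c.
Proof.
move=> jkn; apply: Rintegral_dist_le => // [|w wk]; last first.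
  by rewrite supnorm01_ub // Lnk_node_in01.
apply: measurable_bounded_integrable => //.
- by apply: (le_lt_trans (probability_le1 _ _)); rewrite ?ltry.
- exact: measurable_Lnk_integrand.
- have [M fM] := fbd; exists M; split; first exact: num_real.
  move=> M' /ltW MM' w wk; apply: le_trans MM'.
  by apply: fM; apply: Lnk_node_in01.
Qed.

Lemma Lnk_coef_eq_cst (a b : R) j : (forall t, a < t < b -> f t = c) ->
  n%:R * a < j%:R -> j%:R < n%:R * b - k%:R -> Lnk_coef j = c.
Proof.
move=> fc ja jb; apply: eq_Rintegral_cst => // w.
have nR : 0 < n%:R :> R by rewrite ltr0n.
rewrite /= in_itv /= => /andP[w0 wk]; apply: fc.
by rewrite ltr_pdivlMr ?ltr_pdivrMr //; apply/andP; split; lra.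
Qed.

Lemma Lnk_dist_le (a b x : R) : (k <= n)%N ->
  (forall t, a < t < b -> f t = c) -> 0 <= x <= 1 ->
  `|Lnk mu n k f x - c| <= supnorm01 f c *
     (\sum_(j < (n - k).+1) bern (n - k) x j * (j%:R <= n%:R * a :> R)%:R
      + \sum_(j < (n - k).+1) bern (n - k) x j * (n%:R * b - k%:R <= j%:R :> R)%:R).
Proof.
move=> kn fc x01.
rewrite LnkE -[c in `|_ - c|]mulr1 -[X in c * X](sum_bern (n - k) x).
rewrite mulr_sumr -sumrB.
apply: (le_trans (ler_norm_sum _ _ _)).
rewrite -big_split /= mulr_sumr; apply: ler_sum => j _.
rewrite [c * _]mulrC -mulrBr normrM ger0_norm ?bern_ge0 //.
rewrite -!mulrDr mulrCA; apply: ler_wpM2l; first exact: bern_ge0.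
have jkn : (j + k <= n)%N by rewrite addnC -leq_subRL // -ltnS.
have coefS := Lnk_coef_dist_le jkn.
have [ja|ja] /= := boolP (j%:R <= n%:R * a).
  by apply: (le_trans coefS); rewrite ler_peMr ?supnorm01_ge0 // lerDl.
have [jb|jb] /= := boolP (n%:R * b - k%:R <= j%:R).
  by rewrite add0r mulr1.
by rewrite (Lnk_coef_eq_cst fc) ?subrr ?normr0 ?addr0 ?mulr0 // ltNge.
Qed.

End BernsteinKantorovich.

Theorem theorem2 (R : realType) (f : R -> R) (a b c : R) (n k : nat)
    (mu : probability R R) :
  measurable_fun (`[0, 1] : set R) f ->
  (exists M : R, forall t, t \in `[0, 1] -> `|f t| <= M) ->
  0 < a -> a < b -> b < 1 ->
  (forall t, a < t < b -> f t = c) ->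
  (0 < n)%N -> (k < n)%N ->
  mu `[0, k%:R]%classic = 1%E ->
  n%:R * a / (n - k)%:R < b - k%:R / n%:R ->
  forall x, n%:R * a / (n - k)%:R < x < b - k%:R / n%:R ->
  `|Lnk mu n k f x - f x| <=
    supnorm01 f c *
    (expR (- ((n - k)%:R * rfun x (n%:R * a / (n - k)%:R)))
     + expR (- ((n - k)%:R * rfun x (b - k%:R / n%:R)))).
Proof.
move=> fm fbd a0 ab b1 fc n0 kn mu1 _ x /andP[th1x xth2].
set th1 := n%:R * a / (n - k)%:R in th1x *.
set th2 := b - k%:R / n%:R in xth2 *.
have nR : 0 < n%:R :> R by rewrite ltr0n.
have mR : 0 < (n - k)%:R :> R by rewrite ltr0n subn_gt0.
have mth1 : (n - k)%:R * th1 = n%:R * a by rewrite mulrC divfK ?gt_eqF.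
have mth2 : (n - k)%:R * th2 = n%:R * b - k%:R - k%:R * th2.
  by rewrite natrB ?(ltnW kn) // /th2; field; rewrite gt_eqF.
have a_th1 : a <= th1.
  rewrite -(ler_pM2l mR) mth1 ler_wpM2r ?ler_nat ?leq_subr //.
  exact: ltW.
have th2_b : th2 <= b by rewrite lerBlDr lerDl divr_ge0.
have x0 : 0 < x by apply: lt_trans th1x; apply: lt_le_trans a_th1.
have x1 : x < 1 by apply: lt_trans xth2 _; apply: le_lt_trans b1.
have -> : f x = c by apply: fc; rewrite (le_lt_trans a_th1) ?(lt_le_trans xth2).
apply: le_trans (Lnk_dist_le fm fbd mu1 n0 (ltnW kn) fc _) _.
  by rewrite !ltW.
apply: ler_wpM2l; first exact: supnorm01_ge0.
apply: lerD.
  apply: (bern_lower_tail (P := fun j => j%:R <= n%:R * a)) => // [|j].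
    exact: lt_le_trans a_th1.
  by rewrite mth1.
apply: (bern_upper_tail (P := fun j => n%:R * b - k%:R <= j%:R)) => // [|j].
  exact: le_lt_trans b1.
have : 0 <= k%:R * th2 by rewrite mulr_ge0 // ltW // (lt_trans x0).
lra.
Qed.
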